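(* Let $\mathcal{A}_1,\mathcal{A}_2$ be cyclic finite automata each with at most $m$ states, let $d$ be a multiple of $(m^2)!$, and let $v\in(\Sigma^d)^*$. If $\downarrow_{\preceq_d}v^*\in\mathrm{Adh}_{\preceq_d}(L(\mathcal{A}_i))$ for $i=1,2$, then there is $w\in(\Sigma^d)^*$ such that (i) $\downarrow_{\preceq_d}v^*\subseteq\downarrow_{\preceq_d}w^*$, (ii) $\downarrow_{\preceq_d}w^*\in\mathrm{Adh}_{\preceq_d}(L(\mathcal{A}_i))$ for $i=1,2$, and (iii) $\pi_d(w)\le m^2$.
   Context: A finite automaton is cyclic if it has exactly one initial state and its set of final states equals its set of initial states. $u\preceq_d v$ iff $u=u_0\cdots u_n$ and $v=u_0v_1u_1\cdots v_nu_n$ with every $|v_i|$ divisible by $d$. An ideal is a nonempty, downward closed, directed set; $\mathrm{Adh}_{\preceq_d}(L)$ is the set of $\preceq_d$-ideals $I$ with $I\subseteq\downarrow_{\preceq_d}(L\cap I)$. For $w\in\Sigma^*$ and $i\in[1,d]$, $\kappa_d(w)(i)$ is the set of letters occurring in $w$ at a position $p\equiv i\pmod d$ (positions from $1$). $\pi_d(w)$ is the smallest $t\in[1,d]$ dividing $d$ such that $\kappa_d(w)(i+t)=\kappa_d(w)(i)$ for all $i\in[1,d-t]$. *)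

From mathcomp Require Import all_boot.
Set Implicit Arguments. Unset Strict Implicit. Unset Printing Implicit Defensive.

Record nfa (S : finType) := NFA {
  state : finType;
  init : {set state};
  final : {set state};
  trans : state -> S -> state -> bool }.

Fixpoint run (S : finType) (A : nfa S) (p : state A) (w : seq S) (q : state A) : bool :=
  match w with
  | [::] => p == q
  | a :: w' => [exists r : state A, @trans S A p a r && @run S A r w' q]
  end.

Definition lang (S : finType) (A : nfa S) (w : seq S) : Prop :=
  exists p q, [/\ p \in init A, q \in final A & @run S A p w q].

Definition cyclic_nfa (S : finType) (A : nfa S) : Prop :=
  exists q, init A = [set q] /\ final A = init A.

(* u <=_d v iff u = u0 u1 ... un and v = u0 v1 u1 ... vn un with d | |v_i|;
   the pairs in ps are (v_i, u_i). *)
Definition subd (S : finType) (d : nat) (u v : seq S) : Prop :=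
  exists (u0 : seq S) (ps : seq (seq S * seq S)),
    [/\ u = u0 ++ flatten [seq p.2 | p <- ps],
        v = u0 ++ flatten [seq p.1 ++ p.2 | p <- ps]
      & all (fun p => d %| size p.1) ps].

Definition dclosure (S : finType) (d : nat) (X : seq S -> Prop) : seq S -> Prop :=
  fun u => exists x, X x /\ subd d u x.

Definition is_ideal (S : finType) (d : nat) (I : seq S -> Prop) : Prop :=
  [/\ exists x, I x,
      (forall u v, I v -> subd d u v -> I u)
    & (forall x y, I x -> I y -> exists z, [/\ I z, subd d x z & subd d y z])].

Definition in_adh (S : finType) (d : nat) (L I : seq S -> Prop) : Prop :=
  is_ideal d I /\ (forall u, I u -> dclosure d (fun x => L x /\ I x) u).

Definition star (S : finType) (v : seq S) : seq S -> Prop :=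
  fun x => exists k, x = flatten (nseq k v).

(* kappa_d(w)(i): letters at positions p (from 1) with p = i mod d *)
Definition kappa (S : finType) (d : nat) (w : seq S) (i : nat) : {set S} :=
  [set a | [exists p : 'I_(size w), (tnth (in_tuple w) p == a) && (p.+1 == i %[mod d])]].

Definition pi_d (S : finType) (d : nat) (w : seq S) : nat :=
  head d [seq t <- iota 1 d | (t %| d) &&
          all (fun i => kappa d w (i + t) == kappa d w i) (iota 1 (d - t))].

(* Write K_v for the profile of v: the letters of v together with their positions
   modulo d. For d | |v|, the ideal of v^* consists of the words of length divisible
   by d whose profile is contained in K_v. Such an ideal lies in the adherence of
   the language of a cyclic automaton with state q as soon as every letter allowed
   at residue r labels a transition that is reachable from q at offset r and leads
   back to q, along words whose profile is allowed.
   Pick x2 in L(A2) and x1 in L(A1), both in the ideal of v^*, with v <=_d x2 <=_d x1.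
   The pigeonhole principle on the pairs of states of the two runs along the first
   m^2 positions of x2 yields a loop length t <= m^2 common to both automata, and t
   divides d since (m^2)! does. The concatenation w of the rotations of v by the
   multiples of t below d has as profile the t-periodic closure of K_v; going around
   the common loop shifts offsets by t, so the ideal of w^* remains in both
   adherences, and pi_d(w) <= t. *)

From mathcomp Require Import all_boot zify.
Set Implicit Arguments. Unset Strict Implicit. Unset Printing Implicit Defensive.

Lemma eqmodD d a b c e : a = b %[mod d] -> c = e %[mod d] -> a + c = b + e %[mod d].
Proof. by move=> ab ce; rewrite -modnDm ab ce modnDm. Qed.

Lemma eqmodS d a b : a = b %[mod d] -> a.+1 = b.+1 %[mod d].
Proof. by move=> ab; rewrite -addn1 -(addn1 b); apply: eqmodD. Qed.

Lemma modnDr_dvd d a b : d %| b -> a + b = a %[mod d].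
Proof. by move=> /eqP b0; rewrite -modnDmr b0 addn0. Qed.

Lemma modnDl_dvd d a b : d %| b -> b + a = a %[mod d].
Proof. by move=> b_d; rewrite addnC modnDr_dvd. Qed.

Lemma eqmod_dvdn d a b : a = b %[mod d] -> (d %| a) = (d %| b).
Proof. by rewrite /dvdn => ->. Qed.

Lemma exists_mul_complement d t n :
  0 < d -> 0 < t -> t %| d -> exists n', n * t + n' * t = 0 %[mod d].
Proof.
move=> d_gt0 t_gt0 t_d; exists (n * (d %/ t).-1).
have quot_gt0 : 0 < d %/ t by rewrite divn_gt0 // dvdn_leq.
rewrite -mulnDl -{1}(muln1 n) -mulnDr add1n prednK // -mulnA divnK //.
by rewrite modnMl mod0n.
Qed.

Section Occurrences.

Variables (S : finType) (d : nat).
Implicit Types (z : seq S) (a : S) (K L : nat -> S -> Prop).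

Definition occurs o z a r : Prop :=
  exists i, [/\ i < size z, nth a z i = a & o + i = r %[mod d]].

Definition fits K o z := forall a r, occurs o z a r -> K r a.

Definition mod_invariant K := forall r r' a, r = r' %[mod d] -> K r a -> K r' a.

Lemma occurs_nil o a r : ~ occurs o [::] a r.
Proof. by case=> i []. Qed.

Lemma occurs_cat o z1 z2 a r :
  occurs o (z1 ++ z2) a r <-> occurs o z1 a r \/ occurs (o + size z1) z2 a r.
Proof.
split.
- case=> i [i_lt zi oi]; rewrite nth_cat in zi.
  have [i_lt1|i_ge1] := ltnP i (size z1); first by left; exists i; rewrite i_lt1 in zi.
  right; exists (i - size z1); rewrite ltnNge i_ge1 /= in zi; split => //.
  + by rewrite size_cat in i_lt; rewrite ltn_subLR.
  + by rewrite -addnA subnKC.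
- case=> [[i [i_lt zi oi]]|[i [i_lt zi oi]]].
  + exists i; rewrite size_cat nth_cat i_lt; split => //.
    exact: leq_trans i_lt (leq_addr _ _).
  + exists (size z1 + i); rewrite nth_cat [_ < size z1]ltnNge leq_addr /= addKn size_cat addnA.
    by split => //; rewrite ltn_add2l.
Qed.

Lemma occurs_cons o b z a r :
  occurs o (b :: z) a r <-> (b = a /\ o = r %[mod d]) \/ occurs o.+1 z a r.
Proof.
rewrite -cat1s; split.
- move/occurs_cat; rewrite addn1; case; last by right.
  by case=> -[|i] [] //= _ -> o_r; left; rewrite addn0 in o_r.
- case=> [[ba o_r]|occ]; apply/occurs_cat; last by rewrite addn1; right.
  by left; exists 0; rewrite addn0 ba.
Qed.

Lemma occurs_eqmod o o' z a r r' :
  o = o' %[mod d] -> r = r' %[mod d] -> occurs o z a r -> occurs o' z a r'.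
Proof.
move=> oo' rr' [i [i_lt zi oi]]; exists i; split => //.
by rewrite -rr' -oi; apply: eqmodD.
Qed.

Lemma occurs_shift o n z a r : occurs (o + n) z a (r + n) <-> occurs o z a r.
Proof.
split=> -[i [i_lt zi /eqP oi]]; exists i; split => //; apply/eqP.
- by move: oi; rewrite addnAC eqn_modDr.
- by rewrite addnAC eqn_modDr.
Qed.

(* Positions start at 0 here, so [profile d z r a] means [a \in kappa d z r.+1]. *)
Definition profile z r a := occurs 0 z a r.

Lemma mod_invariant_profile z : mod_invariant (profile z).
Proof. by move=> r r' a rr'; apply: occurs_eqmod. Qed.

Lemma fits_nil K o : fits K o [::].
Proof. by move=> a r /occurs_nil. Qed.

Lemma fits_eqmod K o o' z : o = o' %[mod d] -> fits K o z -> fits K o' z.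
Proof. by move=> oo' zK a r /(occurs_eqmod (esym oo') (erefl _)); apply: zK. Qed.

Lemma fits_mono K L o z : (forall r a, K r a -> L r a) -> fits K o z -> fits L o z.
Proof. by move=> KL zK a r /zK; apply: KL. Qed.

Lemma fits_cat K o z1 z2 :
  fits K o (z1 ++ z2) <-> fits K o z1 /\ fits K (o + size z1) z2.
Proof.
split=> [zK|[z1K z2K] a r /occurs_cat [/z1K|/z2K] //].
by split=> a r occ; apply: zK; apply/occurs_cat; [left|right].
Qed.

Lemma fits_take_drop K o z j n :
  j <= size z -> fits K o z -> fits K (o + j) (take n (drop j z)).
Proof.
move=> j_le; rewrite -{1}(cat_take_drop j z) => /fits_cat [_].
by rewrite size_takel // -{1}(cat_take_drop n (drop j z)) => /fits_cat [].
Qed.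

Lemma fits_cons K o b z :
  mod_invariant K -> fits K o (b :: z) <-> K o b /\ fits K o.+1 z.
Proof.
move=> K_inv; split=> [zK|[Kb zK] a r /occurs_cons [[<- or]|]]; last 2 first.
- exact: K_inv Kb.
- exact: zK.
split=> [|a r occ]; apply: zK; apply/occurs_cons; by [left | right].
Qed.

End Occurrences.

Section Embeddings.

Variables (S : finType) (d : nat).
Implicit Types (z u x y v : seq S) (a : S).

(* An inductive presentation of [subd d]. *)
Inductive embeds : seq S -> seq S -> Prop :=
 | embeds_nil y : d %| size y -> embeds [::] y
 | embeds_cons a u z y : d %| size z -> embeds u y -> embeds (a :: u) (z ++ a :: y).

Lemma embeds_size u x : embeds u x -> size u = size x %[mod d].
Proof.
elim=> [y /eqP y_d|a u' z y z_d _ IH]; first by rewrite mod0n y_d.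
by rewrite size_cat /= -addn1 -(addn1 (size y)) (modnDl_dvd (size y + 1) z_d); apply: eqmodD.
Qed.

Lemma embeds_size_leq u x : embeds u x -> size u <= size x.
Proof.
elim=> // a u' z y _ _ IH; rewrite size_cat /= addnS ltnS.
exact: leq_trans IH (leq_addl _ _).
Qed.

Lemma embeds_occurs o u x a r : embeds u x -> occurs d o u a r -> occurs d o x a r.
Proof.
move=> E; elim: E o => [y _|b u' z y z_d _ IH] o; first by move/occurs_nil.
move/occurs_cons => [[<- o_r]|occ]; apply/occurs_cat; right; apply/occurs_cons.
- by left; split; rewrite ?modnDr_dvd.
- right; apply: occurs_eqmod (IH _ occ) => //.
  by rewrite -addSn modnDr_dvd.
Qed.

Lemma embeds_catl z u x : d %| size z -> embeds u x -> embeds u (z ++ x).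
Proof.
move=> z_d; case=> [y y_d|a u' z' y z'_d E].
- by constructor; rewrite size_cat dvdn_add.
- by rewrite catA; constructor => //; rewrite size_cat dvdn_add.
Qed.

Lemma embeds_prefix c u x : embeds u x -> embeds (c ++ u) (c ++ x).
Proof. by move=> E; elim: c => //= a c IH; rewrite -[a :: (c ++ x)]cat0s; constructor. Qed.

Lemma embeds_refl u : embeds u u.
Proof. by rewrite -[u]cats0; apply: embeds_prefix; constructor. Qed.

Lemma embeds_subd u x : embeds u x -> subd d u x.
Proof.
elim=> [y y_d|a u' z y z_d _ [u0 [ps [-> -> ps_d]]]].
- by exists [::], [:: (y, [::])]; rewrite /= !cats0 andbT.
- by exists [::], ((z, a :: u0) :: ps); rewrite /= -catA z_d.
Qed.

Lemma subd_embeds u x : subd d u x -> embeds u x.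
Proof.
case=> u0 [ps [-> -> ps_d]]; apply: embeds_prefix.
elim: ps ps_d => [|[v1 u1] ps IH] /=; first by constructor.
case/andP=> v1_d ps_d; rewrite -catA; apply: embeds_catl => //.
exact/embeds_prefix/IH.
Qed.

Lemma embeds_index_map u x : embeds u x ->
  exists J : nat -> nat,
    [/\ forall p, p <= size u -> J p <= size x /\ J p = p %[mod d]
      & forall p p', p <= p' <= size u -> J p <= J p'].
Proof.
elim=> [y _|a u' z y z_d _ [J [J_le J_mono]]].
  by exists (fun _ => 0); split=> // p; rewrite leqn0 => /eqP ->.
exists (fun p => if p is k.+1 then size z + (J k).+1 else 0); split.
- move=> [|k] //= k_le; have [Jk_le Jk_mod] := J_le k k_le.
  rewrite size_cat /= leq_add2l ltnS Jk_le; split => //.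
  by rewrite -(addn1 (J k)) -(addn1 k) (modnDl_dvd _ z_d); apply: eqmodD.
- by move=> [|k] [|k'] //= le_kk'; rewrite leq_add2l ltnS; apply: J_mono.
Qed.

Lemma dvdn_size_flatten_nseq v k : d %| size v -> d %| size (flatten (nseq k v)).
Proof. by move=> v_d; elim: k => //= k IH; rewrite size_cat dvdn_add. Qed.

Lemma occurs_flatten_nseq v k o a r : d %| size v ->
  occurs d o (flatten (nseq k v)) a r -> occurs d o v a r.
Proof.
move=> v_d; elim: k o => [|k IH] o /=; first by move/occurs_nil.
by case/occurs_cat => [//|/IH]; apply: occurs_eqmod; rewrite ?modnDr_dvd.
Qed.

(* Each letter of [u] is found in its own copy of [v], at the right residue. *)
Lemma embeds_flatten_nseq v u o c : d %| size v -> fits d (profile d v) o u ->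
  d %| o + size u -> d %| o + size c -> embeds u (c ++ flatten (nseq (size u) v)).
Proof.
move=> v_d; elim: u o c => [|a u IH] o c uK ou_d oc_d /=.
  by constructor; rewrite cats0 -(dvdn_addr _ (ou_d : d %| o + 0)) addn0.
have [[i [i_lt vi oi]] uK'] := (fits_cons _ _ _ (@mod_invariant_profile _ d v)).1 uK.
rewrite add0n in oi.
have v_split : v = take i v ++ a :: drop i.+1 v.
  by rewrite -vi -drop_nth ?cat_take_drop.
rewrite {1}v_split -catA /= catA; constructor.
- rewrite size_cat size_takel ?(ltnW i_lt) //.
  by rewrite (eqmod_dvdn (eqmodD (erefl (size c %% d)) oi)) addnC.
- apply: IH uK' _ _; first by rewrite addSn -addnS.
  rewrite size_drop addSn -addnS subnSK //.
  rewrite -(eqmod_dvdn (eqmodD oi (erefl ((size v - i) %% d)))).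
  by rewrite subnKC // ltnW.
Qed.

Lemma dclosure_starP v u : d %| size v ->
  dclosure d (star v) u <-> d %| size u /\ fits d (profile d v) 0 u.
Proof.
move=> v_d; split.
- case=> _ [[k ->] /subd_embeds E]; split.
  + by rewrite (eqmod_dvdn (embeds_size E)) dvdn_size_flatten_nseq.
  + by move=> a r /(embeds_occurs E) /occurs_flatten_nseq; apply.
- case=> u_d uK; exists (flatten (nseq (size u) v)); split; first by exists (size u).
  apply: embeds_subd; rewrite -[flatten _]cat0s.
  by apply: (embeds_flatten_nseq (o := 0)) => //; rewrite add0n.
Qed.

Lemma dclosure_star_refl v : d %| size v -> dclosure d (star v) v.
Proof. by move=> v_d; apply/dclosure_starP => //; split=> // a r. Qed.

Lemma is_ideal_dclosure_star v : d %| size v -> is_ideal d (dclosure d (star v)).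
Proof.
move=> v_d; split.
- by exists [::]; apply/dclosure_starP => //; split; last exact: fits_nil.
- move=> u x /(dclosure_starP _ v_d) [x_d xK] /subd_embeds E.
  apply/dclosure_starP => //; split; first by rewrite (eqmod_dvdn (embeds_size E)).
  by move=> a r /(embeds_occurs E) /xK.
- move=> x y /(dclosure_starP _ v_d) [x_d xK] /(dclosure_starP _ v_d) [y_d yK].
  exists (x ++ y); split.
  + apply/dclosure_starP => //; rewrite size_cat dvdn_add //; split => //.
    by apply/fits_cat; split => //; apply: fits_eqmod yK; rewrite add0n (eqP x_d) mod0n.
  + apply: embeds_subd; rewrite -{1}[x]cats0; apply: embeds_prefix; exact: embeds_nil.
  + by apply: embeds_subd; apply: embeds_catl => //; apply: embeds_refl.
Qed.

End Embeddings.

Section Automata.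

Variables (S : finType) (A : nfa S) (d : nat).
Implicit Types (z u x y : seq S) (a : S) (K L : nat -> S -> Prop) (q s : state A).

Lemma run_cat p z1 z2 q : run p (z1 ++ z2) q <-> exists s, run p z1 s /\ run s z2 q.
Proof.
elim: z1 p => [|a z IH] p /=.
  by split=> [|[s [/eqP -> //]]]; exists p.
split=> [/existsP [s' /andP [ps' /IH [s [s's sq]]]]|[s [/existsP [s' /andP [ps' s's]] sq]]].
  by exists s; split => //; apply/existsP; exists s'; rewrite ps'.
by apply/existsP; exists s'; rewrite ps' /=; apply/IH; exists s.
Qed.

Lemma run_cons p a z q : run p (a :: z) q <-> exists s, trans p a s /\ run s z q.
Proof.
split=> [/existsP [s /andP [ps sq]]|[s [ps sq]]]; first by exists s.
by apply/existsP; exists s; rewrite ps.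
Qed.

Lemma lang_cyclic q y : init A = [set q] -> final A = init A -> lang A y <-> run q y q.
Proof.
move=> Aq Af; split=> [[p [p' []]]|yq]; last by exists q, q; rewrite Af Aq !inE.
by rewrite Af Aq !inE => /eqP -> /eqP ->.
Qed.

Lemma run_states p x q : run p x q ->
  exists st : nat -> state A, [/\ st 0 = p, st (size x) = q &
    forall j j', j <= j' <= size x -> run (st j) (take (j' - j) (drop j x)) (st j')].
Proof.
elim: x p => [|a x IH] p.
  by move=> /eqP <-; exists (fun=> p); split=> // -[|j] [|j'] //=.
case/run_cons => s [ps /IH [st [st0 stx st_run]]].
exists (fun j => if j is k.+1 then st k else p); split=> // -[|k] [|k'] //= le_kk'.
- have := st_run 0 k'; rewrite subn0 drop0 st0 => /(_ le_kk') k'_run.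
  by apply/run_cons; exists s.
- by rewrite subSS; apply: st_run.
Qed.

Definition reach K s r s' r' :=
  exists z, [/\ run s z s', fits d K r z & r + size z = r' %[mod d]].

Lemma reach_refl K s r : reach K s r s r.
Proof. by exists [::]; split; [exact: eqxx | exact: (@fits_nil _ d K r) | rewrite addn0]. Qed.

Lemma reach_trans K s1 s2 s3 r1 r2 r3 :
  reach K s1 r1 s2 r2 -> reach K s2 r2 s3 r3 -> reach K s1 r1 s3 r3.
Proof.
case=> z1 [run1 fit1 r12] [z2 [run2 fit2 r23]]; exists (z1 ++ z2); split.
- by apply/run_cat; exists s2.
- by apply/fits_cat; split => //; apply: fits_eqmod (esym r12) fit2.
- by rewrite size_cat addnA -r23; apply: eqmodD.
Qed.

Lemma reach_eqmod K s s' r1 r2 r1' r2' :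
  r1 = r2 %[mod d] -> r1' = r2' %[mod d] -> reach K s r1 s' r1' -> reach K s r2 s' r2'.
Proof.
move=> r12 r12' [z [sz fit rz]]; exists z; split; first by [].
  exact: fits_eqmod fit.
by rewrite -r12' -rz; apply: eqmodD.
Qed.

Lemma reach_mono K L s s' r r' :
  (forall r a, K r a -> L r a) -> reach K s r s' r' -> reach L s r s' r'.
Proof. by move=> KL [z [sz fit rz]]; exists z; split => //; apply: fits_mono fit. Qed.

Lemma reach_shift K e s s' r r' : mod_invariant d K -> (forall r a, K r a -> K (r + e) a) ->
  reach K s r s' r' -> reach K s (r + e) s' (r' + e).
Proof.
move=> K_inv K_e [z [sz fit rz]]; exists z; split => //.
- move=> a rho [i [i_lt zi rho_i]].
  have /K_e : K (r + i) a by apply: fit; exists i.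
  by apply: K_inv; rewrite -rho_i addnAC.
- by rewrite addnAC; apply: eqmodD.
Qed.

Definition tracks K q x (st : nat -> state A) :=
  [/\ st 0 = q, st (size x) = q,
      forall j j', j <= j' <= size x -> reach K (st j) j (st j') j'
    & forall i a, i < size x -> nth a x i = a -> trans (st i) a (st i.+1)].

Lemma run_tracks K q x : run q x q -> fits d K 0 x -> exists st, tracks K q x st.
Proof.
move=> xq fit; have [st [st0 stx st_run]] := run_states xq.
exists st; split => // [j j' /andP [le_jj' le_j'x]|i a i_lt xi].
- exists (take (j' - j) (drop j x)); split; first by apply: st_run; rewrite le_jj'.
  + by rewrite -[j]add0n; apply: fits_take_drop fit; apply: leq_trans le_j'x.
  + by rewrite size_takel ?subnKC // size_drop leq_sub2r.
- have := st_run i i.+1; rewrite leqnSn i_lt subSnn (drop_nth a i_lt) xi /= take0.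
  by move=> /(_ isT) /existsP [s /andP [ist /eqP <-]].
Qed.

Lemma tracks_mono K L q x st :
  (forall r a, K r a -> L r a) -> tracks K q x st -> tracks L q x st.
Proof. by move=> KL [st0 stx st_reach st_trans]; split => // j j' /st_reach /reach_mono; apply. Qed.

Definition gadgets K L q := forall r a, L r a ->
  exists s1 s2, [/\ trans s1 a s2, reach K q 0 s1 r & reach K s2 r.+1 q 0].

Definition looping K q t :=
  exists s r, [/\ reach K q 0 s r, reach K s r q 0 & reach K s r s (r + t)].

Lemma looping_mono K L q t :
  (forall r a, K r a -> L r a) -> looping K q t -> looping L q t.
Proof. by move=> KL [s [r [qs sq ss]]]; exists s, r; split; apply: (reach_mono KL). Qed.

Lemma gadgets_of_tracks K L q x st : tracks K q x st -> d %| size x ->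
  (forall r a, L r a -> occurs d 0 x a r) -> gadgets K L q.
Proof.
move=> [st0 stx st_reach st_trans] x_d Lx r a /Lx [i [i_lt xi]]; rewrite add0n => ir.
exists (st i), (st i.+1); split; first exact: st_trans.
- by rewrite -st0; apply: reach_eqmod (st_reach 0 i _) => //; exact: ltnW.
- rewrite -stx; apply: reach_eqmod (st_reach i.+1 (size x) _); rewrite ?i_lt ?leqnn //.
  + exact: eqmodS.
  + by rewrite mod0n (eqP x_d).
Qed.

Lemma looping_of_tracks K q x st i i' t : tracks K q x st -> d %| size x ->
  i <= i' <= size x -> st i = st i' -> i + t = i' %[mod d] -> looping K q t.
Proof.
move=> [st0 stx st_reach _] x_d /andP [le_ii' le_i'x] st_ii' it.
have i_le : i <= size x := leq_trans le_ii' le_i'x.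
exists (st i), i; split.
- by rewrite -st0; apply: st_reach.
- rewrite -stx; apply: reach_eqmod (st_reach i (size x) _); rewrite ?i_le ?leqnn //.
  by rewrite mod0n (eqP x_d).
- by rewrite {2}st_ii'; apply: reach_eqmod (st_reach i i' _); rewrite ?le_ii'.
Qed.

Section Periodic.

Variables (K : nat -> S -> Prop) (t : nat).
Hypotheses (d_gt0 : 0 < d) (t_gt0 : 0 < t) (t_d : t %| d) (K_inv : mod_invariant d K).
Hypothesis K_per : forall r a, K r a -> K (r + t) a.

Lemma periodic_mul n r a : K r a -> K (r + n * t) a.
Proof. by elim: n r => [|n IH] r; rewrite ?addn0 // mulSn addnA => /K_per /IH. Qed.

Lemma reach_shift_mul n s s' r r' :
  reach K s r s' r' -> reach K s (r + n * t) s' (r' + n * t).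
Proof. by apply: reach_shift => // r0 a; apply: periodic_mul. Qed.

(* Going around the loop [n] times shifts the offset by [n * t]; a complementary
   number of turns brings it back to [0]. *)
Lemma looping_cycles q : looping K q t ->
  forall n, reach K q 0 q (n * t) /\ reach K q (n * t) q 0.
Proof.
case=> s [r [qs sq ss]].
have loop n : reach K s r s (r + n * t).
  elim: n => [|n IH]; first by rewrite addn0; apply: reach_refl.
  apply: reach_trans IH _; have := reach_shift_mul n ss.
  by rewrite mulSn addnA [r + t + _]addnAC.
have forth n : reach K q 0 q (n * t).
  apply: reach_trans qs (reach_trans (loop n) _).
  by have := reach_shift_mul n sq; rewrite add0n.
move=> n; split => //; have [n' nn'] := exists_mul_complement n d_gt0 t_gt0 t_d.
have := reach_shift_mul n (forth n'); rewrite add0n.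
by apply: reach_eqmod; rewrite // addnC nn'.
Qed.

Lemma gadgets_periodic L L' q : (forall r a, L' r a -> exists c, L (r + c * t) a) ->
  gadgets K L q -> looping K q t -> gadgets K L' q.
Proof.
move=> L'L gadL /looping_cycles cycles r a /L'L [c /gadL [s1 [s2 [tr qs1 s2q]]]].
have [n' cn'] := exists_mul_complement c d_gt0 t_gt0 t_d.
exists s1, s2; split => //.
- apply: reach_trans (cycles n').1 _; have := reach_shift_mul n' qs1; rewrite add0n.
  by apply: reach_eqmod; rewrite // -addnA -modnDmr cn' mod0n addn0.
- apply: reach_trans _ (cycles n').2; have := reach_shift_mul n' s2q; rewrite add0n.
  by apply: reach_eqmod; rewrite // addSn -addnA -addSn -modnDmr cn' mod0n addn0.
Qed.

End Periodic.

Lemma cover_by_gadgets K q : mod_invariant d K -> gadgets K K q ->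
  forall u o, fits d K o u -> d %| o + size u ->
  exists y1 y2, [/\ run q (y1 ++ y2) q, fits d K 0 (y1 ++ y2),
                    size y1 = o %[mod d] & embeds d u y2].
Proof.
move=> K_inv gad; elim=> [|a u IH] o fit ou_d.
  exists [::], [::]; split; [exact: eqxx | exact: fits_nil | | exact: embeds_nil].
  by rewrite mod0n -(eqP ou_d) addn0.
have [Ka fit'] := (fits_cons _ _ _ K_inv).1 fit.
have [s1 [s2 [s12 [z1 [qs1 fit1 z1o]] [z2 [s2q fit2 z2o]]]]] := gad _ _ Ka.
rewrite add0n in z1o.
have [|y1 [y2 [yq fity y1o emb]]] := IH o.+1 fit'; first by rewrite addSnnS.
have z1o' : (0 + size z1).+1 = o.+1 %[mod d] by rewrite add0n; apply: eqmodS.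
exists z1, (a :: z2 ++ y1 ++ y2); split => //.
- apply/run_cat; exists s1; split => //; apply/run_cons; exists s2; split => //.
  by apply/run_cat; exists q.
- apply/fits_cat; split => //; apply/(fits_cons _ _ _ K_inv); split.
    by apply: K_inv Ka; rewrite add0n z1o.
  apply/fits_cat; split; first exact: fits_eqmod (esym z1o') fit2.
  apply: fits_eqmod fity.
  by rewrite (eqmodD z1o' (erefl (size z2 %% d))) z2o mod0n.
- rewrite -[a :: (z2 ++ _)]cat0s catA; apply: embeds_cons => //; apply: embeds_catl emb.
  by rewrite size_cat (eqmod_dvdn (eqmodD (erefl (size z2 %% d)) y1o)) addnC /dvdn z2o mod0n.
Qed.

Lemma in_adh_of_gadgets q w : init A = [set q] -> final A = init A -> d %| size w ->
  gadgets (profile d w) (profile d w) q -> in_adh d (lang A) (dclosure d (star w)).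
Proof.
move=> Aq Af w_d gad; split; first exact: is_ideal_dclosure_star.
move=> u /(dclosure_starP _ w_d) [u_d fit].
have [|y1 [y2 [yq fity y1o emb]]] :=
  cover_by_gadgets (@mod_invariant_profile _ d w) gad fit; first by rewrite add0n.
have y1_d : d %| size y1 by rewrite /dvdn y1o mod0n.
exists (y1 ++ y2); split; first split.
- exact/(lang_cyclic _ Aq Af).
- apply/dclosure_starP => //; split => //.
  by rewrite size_cat dvdn_add // -(eqmod_dvdn (embeds_size emb)).
- exact/embeds_subd/embeds_catl.
Qed.

End Automata.

Section Periodize.

Variables (S : finType) (d : nat).
Implicit Types (z v w : seq S) (a : S).

Lemma occurs_rot n v a r : n <= size v -> d %| size v ->
  occurs d 0 (rot n v) a r <-> occurs d 0 v a (r + n).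
Proof.
move=> n_le /eqP v_d; rewrite /rot -{3}(cat_take_drop n v); split.
- case/occurs_cat => occ; apply/occurs_cat.
  + by right; rewrite size_takel //; apply/occurs_shift.
  + left; rewrite add0n size_drop -(occurs_shift _ _ n) in occ.
    by apply: occurs_eqmod occ; rewrite // subnK // v_d mod0n.
- case/occurs_cat => occ; apply/occurs_cat.
  + right; rewrite add0n size_drop -(occurs_shift _ _ n).
    by apply: occurs_eqmod occ; rewrite // subnK // v_d mod0n.
  + by left; move: occ; rewrite size_takel // add0n -{1}[n]add0n => /occurs_shift.
Qed.

Lemma occurs_flatten (zs : seq (seq S)) a r : (forall z, z \in zs -> d %| size z) ->
  occurs d 0 (flatten zs) a r <-> exists2 z, z \in zs & occurs d 0 z a r.
Proof.
elim: zs => [|z zs IH] zs_d /=; first by split=> [/occurs_nil|[]].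
have z_d : d %| size z by apply: zs_d; rewrite mem_head.
have {}IH : occurs d 0 (flatten zs) a r <-> exists2 z', z' \in zs & occurs d 0 z' a r.
  by apply: IH => z' z'_in; apply: zs_d; rewrite inE z'_in orbT.
have shift o : o = 0 %[mod d] -> occurs d o (flatten zs) a r <-> occurs d 0 (flatten zs) a r.
  by move=> o0; split; apply: occurs_eqmod.
rewrite occurs_cat add0n shift ?(eqP z_d) ?mod0n // IH.
split=> [[occ|[z' z'_in occ]]|[z' ]]; first by exists z; rewrite ?mem_head.
  by exists z'; rewrite // inE z'_in orbT.
by rewrite inE => /orP [/eqP -> occ|z'_in occ]; [left | right; exists z'].
Qed.

Definition periodize t v := flatten [seq rot (c * t) v | c <- iota 0 (d %/ t)].

Lemma size_periodize t v : d %| size v -> d %| size (periodize t v).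
Proof.
move=> v_d; rewrite /periodize; elim: (iota _ _) => //= c cs IH.
by rewrite size_cat size_rot dvdn_add.
Qed.

Lemma kappa_occurs w i a : 0 < d -> a \in kappa d w i <-> occurs d 0 w a (i + d.-1).
Proof.
move=> d_gt0.
have shift p : (p.+1 == i %[mod d]) = (p == i + d.-1 %[mod d]).
  by rewrite -(eqn_modDr d.-1) addSn -addnS prednK // modnDr.
rewrite inE; split.
- case/existsP=> p /andP [/eqP wp pi]; exists p; split => //.
  + by move: wp; rewrite (tnth_nth a).
  + by apply/eqP; rewrite add0n -shift.
- case=> p [p_lt wp pi]; apply/existsP; exists (Ordinal p_lt).
  by rewrite (tnth_nth a) /= wp eqxx /= shift; apply/eqP; rewrite -pi add0n.
Qed.

Lemma head_filter_iota_le (P : pred nat) x0 m n t :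
  m <= t < m + n -> P t -> head x0 [seq y <- iota m n | P y] <= t.
Proof.
elim: n m => [|n IH] m; first by rewrite addn0 => /andP [/leq_ltn_trans H /H]; rewrite ltnn.
move=> /andP [m_le t_lt] Pt /=; case: ifP => // Pm; apply: IH => //.
rewrite addSnnS t_lt andbT ltn_neqAle m_le andbT.
by apply/eqP => mt; rewrite mt Pt in Pm.
Qed.

Lemma pi_d_le_period w t : 0 < d -> 0 < t -> t %| d ->
  (forall r a, profile d w (r + t) a <-> profile d w r a) -> pi_d d w <= t.
Proof.
move=> d_gt0 t_gt0 t_d w_per; apply: head_filter_iota_le.
  by rewrite t_gt0 add1n ltnS dvdn_leq.
rewrite t_d /=; apply/allP => i _; apply/eqP/setP => a.
apply/idP/idP => /kappa_occurs occ; apply/kappa_occurs => //.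
- by apply/(w_per (i + d.-1)); rewrite addnAC; apply: occ.
- by rewrite addnAC; apply/w_per; apply: occ.
Qed.

Lemma pi_d_nil : 0 < d -> pi_d d ([::] : seq S) <= 1.
Proof. by move=> d_gt0; apply: pi_d_le_period => // r a; split=> /occurs_nil []. Qed.

Section PeriodizeProfile.

Variables (t : nat) (v : seq S).
Hypotheses (d_gt0 : 0 < d) (t_gt0 : 0 < t) (t_d : t %| d).
Hypotheses (v_d : d %| size v) (v_gt0 : 0 < size v).

Let quot_gt0 : 0 < d %/ t.
Proof. by rewrite divn_gt0 // dvdn_leq. Qed.

Let shift_le c : c < d %/ t -> c * t <= size v.
Proof.
move=> c_lt; apply: leq_trans (dvdn_leq v_gt0 v_d).
by rewrite -(divnK t_d) leq_mul2r ltnW ?orbT.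
Qed.

Lemma profile_periodize r a :
  profile d (periodize t v) r a <-> exists c, profile d v (r + c * t) a.
Proof.
rewrite /profile occurs_flatten => [|_ /mapP [c _ ->]]; last by rewrite size_rot.
split=> [[_ /mapP [c c_in ->]]|[c occ]].
  rewrite mem_iota add0n in c_in.
  by move/occurs_rot => occ; exists c; apply: occ => //; apply: shift_le.
have c_lt : c %% (d %/ t) < d %/ t by rewrite ltn_mod.
exists (rot (c %% (d %/ t) * t) v); first by apply: map_f; rewrite mem_iota.
apply/occurs_rot; rewrite ?shift_le //; apply: occurs_eqmod occ => //; apply: eqmodD => //.
by rewrite {1}(divn_eq c (d %/ t)) mulnDl -mulnA divnK // modnMDl.
Qed.

Lemma profile_sub_periodize r a : profile d v r a -> profile d (periodize t v) r a.
Proof. by move=> occ; apply/profile_periodize; exists 0; rewrite addn0. Qed.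

Lemma profile_periodize_periodic r a :
  profile d (periodize t v) (r + t) a <-> profile d (periodize t v) r a.
Proof.
rewrite !profile_periodize; split=> -[c occ].
  by exists c.+1; rewrite mulSn addnA.
exists (c + (d %/ t).-1); apply: occurs_eqmod occ => //.
have -> : r + t + (c + (d %/ t).-1) * t = r + c * t + d %/ t * t.
  by rewrite -{2}(prednK quot_gt0) mulSn mulnDl; lia.
by rewrite divnK // modnDr.
Qed.

Lemma dclosure_star_sub_periodize u :
  dclosure d (star v) u -> dclosure d (star (periodize t v)) u.
Proof.
move=> /(dclosure_starP _ v_d) [u_d fit].
apply/dclosure_starP; first exact: size_periodize.
by split=> //; apply: fits_mono fit => r a; apply: profile_sub_periodize.
Qed.

Lemma pi_d_periodize : pi_d d (periodize t v) <= t.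
Proof. by apply: pi_d_le_period => // r a; apply: profile_periodize_periodic. Qed.

End PeriodizeProfile.

End Periodize.

Lemma nat_fun_collision (T : finType) n (f : nat -> T) : #|T| <= n ->
  exists p p', [/\ p < p', p' <= n & f p = f p'].
Proof.
move=> T_le; pose g (i : 'I_n.+1) := f i.
have /injectivePn [i [j ij gij]] : ~~ injectiveb g.
  apply/injectiveP => /leq_card; rewrite card_ord => /leq_trans /(_ T_le).
  by rewrite ltnn.
have [lt_ij|lt_ji|/val_inj eq_ij] := ltngtP i j; last by rewrite eq_ij eqxx in ij.
- by exists i, j; split=> //; rewrite -ltnS.
- by exists j, i; split=> //; rewrite -ltnS.
Qed.

(* Pigeonhole on the pairs (state of A1 at the matching position of x1, state of
   A2) along a prefix of x2 gives a common loop length. *)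
Lemma common_loop (S : finType) (A1 A2 : nfa S) d K (q1 : state A1) (q2 : state A2) x1 x2 :
  run q1 x1 q1 -> run q2 x2 q2 -> fits d K 0 x1 -> fits d K 0 x2 ->
  d %| size x1 -> d %| size x2 -> embeds d x2 x1 ->
  #|state A1| * #|state A2| <= size x2 ->
  exists t, [/\ 0 < t <= #|state A1| * #|state A2|, looping d K q1 t & looping d K q2 t].
Proof.
move=> x1q x2q fit1 fit2 x1_d x2_d x2x1 card_le.
have [st1 tr1] := run_tracks x1q fit1; have [st2 tr2] := run_tracks x2q fit2.
have [J [J_le J_mono]] := embeds_index_map x2x1.
have [|p [p' [lt_pp' p'_le [e1 e2]]]] :=
  nat_fun_collision (fun p => (st1 (J p), st2 p)) (_ : _ <= #|state A1| * #|state A2|).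
  by rewrite card_prod.
have p'_x2 : p' <= size x2 := leq_trans p'_le card_le.
have le_pp' : p <= p' := ltnW lt_pp'.
exists (p' - p); split.
- by rewrite subn_gt0 lt_pp' (leq_trans (leq_subr _ _)).
- have [Jp_le Jp] := J_le p (leq_trans le_pp' p'_x2); have [Jp'_le Jp'] := J_le p' p'_x2.
  apply: looping_of_tracks tr1 x1_d _ e1 _; first by rewrite J_mono ?le_pp'.
  by rewrite Jp' -modnDml Jp modnDml subnKC.
- apply: looping_of_tracks tr2 x2_d _ e2 _; first by rewrite le_pp'.
  by rewrite subnKC.
Qed.

Lemma in_adh_run (S : finType) (A : nfa S) d (q : state A) v u :
  init A = [set q] -> final A = init A -> d %| size v ->
  in_adh d (lang A) (dclosure d (star v)) -> dclosure d (star v) u ->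
  exists x, [/\ run q x q, d %| size x, fits d (profile d v) 0 x & embeds d u x].
Proof.
move=> Aq Af v_d [_ adh] /adh [x [[Ax /(dclosure_starP _ v_d) [x_d fit]] /subd_embeds ux]].
by exists x; split => //; apply/(lang_cyclic _ Aq Af).
Qed.

Lemma in_adh_periodize (S : finType) (A : nfa S) d (q : state A) v x t :
  init A = [set q] -> final A = init A ->
  0 < d -> 0 < t -> t %| d -> d %| size v -> 0 < size v ->
  run q x q -> d %| size x -> fits d (profile d v) 0 x ->
  (forall r a, profile d v r a -> profile d x r a) -> looping d (profile d v) q t ->
  in_adh d (lang A) (dclosure d (star (periodize d t v))).
Proof.
move=> Aq Af d_gt0 t_gt0 t_d v_d v_gt0 xq x_d fit vx loop.
have vw := profile_sub_periodize d_gt0 t_gt0 t_d v_d v_gt0.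
have w_per r a : profile d (periodize d t v) r a -> profile d (periodize d t v) (r + t) a.
  by move/(profile_periodize_periodic d_gt0 t_gt0 t_d v_d v_gt0).
have w_v r a : profile d (periodize d t v) r a -> exists c, profile d v (r + c * t) a.
  by move/(profile_periodize d_gt0 t_gt0 t_d v_d v_gt0).
have [st tr] := run_tracks xq fit.
have gad := gadgets_of_tracks (tracks_mono vw tr) x_d vx.
apply: in_adh_of_gadgets Aq Af (size_periodize _ v_d) _.
exact: gadgets_periodic d_gt0 t_gt0 t_d (@mod_invariant_profile _ d _) w_per _ _ _ w_v gad
  (looping_mono vw loop).
Qed.

Theorem mainTheorem14 (S : finType) (A1 A2 : nfa S) (m d : nat) (v : seq S) :
  cyclic_nfa A1 -> cyclic_nfa A2 ->
  #|state A1| <= m -> #|state A2| <= m ->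
  0 < d -> (m ^ 2)`! %| d ->
  d %| size v ->
  in_adh d (lang A1) (dclosure d (star v)) ->
  in_adh d (lang A2) (dclosure d (star v)) ->
  exists w : seq S,
    [/\ d %| size w,
        (forall u, dclosure d (star v) u -> dclosure d (star w) u),
        in_adh d (lang A1) (dclosure d (star w)) /\ in_adh d (lang A2) (dclosure d (star w))
      & pi_d d w <= m ^ 2].
Proof.
move=> [q1 [A1q A1f]] [q2 [A2q A2f]] A1_m A2_m d_gt0 fact_d v_d adh1 adh2.
have m_gt0 : 0 < m by apply: leq_trans A1_m; apply/card_gt0P; exists q1.
have [v0|v_gt0] := posnP (size v).
  exists v; split => //; rewrite (size0nil v0).
  by apply: leq_trans (@pi_d_nil S d d_gt0) _; rewrite expn_gt0 m_gt0.
have [x2 [x2q x2_d fit2 vx2]] := in_adh_run A2q A2f v_d adh2 (dclosure_star_refl v_d).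
have [|x1 [x1q x1_d fit1 x2x1]] := in_adh_run A1q A1f v_d adh1 (u := x2).
  exact/(dclosure_starP _ v_d).
have card_m : #|state A1| * #|state A2| <= m ^ 2 by rewrite expnS expn1 leq_mul.
have m_x2 : m ^ 2 <= size x2.
  apply: leq_trans (fact_geq _) (leq_trans (dvdn_leq d_gt0 fact_d) _).
  exact: leq_trans (dvdn_leq v_gt0 v_d) (embeds_size_leq vx2).
have [|t [/andP [t_gt0 t_le] loop1 loop2]] := common_loop x1q x2q fit1 fit2 x1_d x2_d x2x1.
  exact: leq_trans card_m m_x2.
have t_m : t <= m ^ 2 := leq_trans t_le card_m.
have t_d : t %| d by apply: dvdn_trans (dvdn_fact _) fact_d; rewrite t_gt0.
exists (periodize d t v); split.
- exact: size_periodize.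
- exact: dclosure_star_sub_periodize d_gt0 t_gt0 t_d v_d v_gt0.
- split.
  + apply: (in_adh_periodize A1q A1f d_gt0 t_gt0 t_d v_d v_gt0 x1q x1_d fit1 _ loop1).
    by move=> r a /(embeds_occurs vx2) /(embeds_occurs x2x1).
  + apply: (in_adh_periodize A2q A2f d_gt0 t_gt0 t_d v_d v_gt0 x2q x2_d fit2 _ loop2).
    by move=> r a /(embeds_occurs vx2).
- exact: leq_trans (pi_d_periodize d_gt0 t_gt0 t_d v_d v_gt0) t_m.
Qed.
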